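(* Let $O,A,B$ be three pairwise distinct points of the plane, $\vec\alpha=\overrightarrow{AO}/OA$, $\vec\beta=\overrightarrow{OB}/OB$, with oriented angle $\Omega=(\widehat{\vec\alpha,\vec\beta})\in\,]0,\pi[$. Let $p\ge2$, $\theta_0=\Omega/p$, and let $\mathcal{E}_p$ be the set of curves in $\mathcal{E}$ consisting of $p$ consecutive arcs of circle of radii $R_0,\dots,R_{p-1}>0$, each turning counterclockwise by the angle $\theta_0$, starting at $A$ with tangent $\vec\alpha$; identify such a curve with $R=(R_0,\dots,R_{p-1})\in(\mathbb{R}_+^* )^p$, so that $\mathcal{E}_p=\{R\in(\mathbb{R}_+^* )^p:\mathcal{A}R=\mathcal{B}\}$ with $\mathcal{A},\mathcal{B}$ as in the context. If $\mathcal{E}_p$ is nonempty, then there exists $X\in\mathcal{E}_p$ minimizing the maximum of the curvature: $$\big\|\,\|X''\|\,\big\|_{L^\infty(0,L(X))}=\min_{Z\in\mathcal{E}_p}\big\|\,\|Z''\|\,\big\|_{L^\infty(0,L(Z))}.$$ Setting $F(X)=\min_{1\le k\le p}X_k$ for $X=(X_1,\dots,X_p)\in\mathbb{R}_+^p$, this problem is equivalent to $$F(X)=\max_{Z\in(\mathbb{R}_+^* )^p,\ \mathcal{A}Z=\mathcal{B}}F(Z),$$ which admits a solution as soon as there exists $X^0\in(\mathbb{R}_+^* )^p$ with $\mathcal{A}X^0=\mathcal{B}$.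
   Context: $\mathcal{E}$ is the set of curves $X:[0,L]\to\mathbb{R}^2$ ($L>0$), $X\in W^{2,\infty}(0,L;\mathbb{R}^2)$, with $\|X'(s)\|=1$, $X(0)=A$, $X(L)=B$, $X'(0)=\vec\alpha$, $X'(L)=\vec\beta$, and nondecreasing continuous angle $\phi(s)=(\widehat{\vec\alpha,X'(s)})$. Identifying the plane with $\mathbb{C}$ via the orthonormal frame with origin $A$ and first axis $\vec\alpha$, with $b$ the affix of $B$: $\mathcal{A}\in\mathcal{M}_{2,p}(\mathbb{R})$ has entries $\mathcal{A}_{1,k}=\operatorname{Re}(i(1-e^{i\theta_0})e^{i(k-1)\theta_0})$, $\mathcal{A}_{2,k}=\operatorname{Im}(i(1-e^{i\theta_0})e^{i(k-1)\theta_0})$, and $\mathcal{B}=(\operatorname{Re}b,\operatorname{Im}b)^T$. $\|\,\|X''\|\,\|_{L^\infty}$ is the essential supremum of $\|X''\|$. *)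

From mathcomp Require Import all_boot all_order all_algebra.
From mathcomp Require Import all_classical all_reals all_analysis.
Set Implicit Arguments. Unset Strict Implicit. Unset Printing Implicit Defensive.
Import Order.TTheory GRing.Theory Num.Theory.
Local Open Scope ring_scope.
Local Open Scope classical_set_scope.

Section Defs.
Variable R : realType.

Definition vsub (P Q : R * R) : R * R := (P.1 - Q.1, P.2 - Q.2).
Definition vnorm (u : R * R) : R := Num.sqrt (u.1 ^+ 2 + u.2 ^+ 2).
Definition vscale (c : R) (u : R * R) : R * R := (c * u.1, c * u.2).
Definition vrot (t : R) (u : R * R) : R * R :=
  (cos t * u.1 - sin t * u.2, sin t * u.1 + cos t * u.2).

Definition alpha_vec (O A : R * R) := vscale (vnorm (vsub O A))^-1 (vsub O A).
Definition beta_vec (O B : R * R) := vscale (vnorm (vsub B O))^-1 (vsub B O).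

(* affix b of B in the orthonormal frame with origin A and first axis alpha
   (second axis = alpha rotated by +pi/2) *)
Definition affix_re (al : R * R) (A B : R * R) : R :=
  (vsub B A).1 * al.1 + (vsub B A).2 * al.2.
Definition affix_im (al : R * R) (A B : R * R) : R :=
  al.1 * (vsub B A).2 - al.2 * (vsub B A).1.

(* The matrix \mathcal{A}: column k (0-indexed j = k-1) is the complex number
   i (1 - e^{i th0}) e^{i j th0} = i (e^{i j th0} - e^{i (j+1) th0}). *)
Definition matA (p : nat) (th0 : R) : 'M[R]_(2, p) :=
  \matrix_(i < 2, j < p)
     if i == 0 :> nat
     then sin (j.+1%:R * th0) - sin (j%:R * th0)
     else cos (j%:R * th0) - cos (j.+1%:R * th0).

Definition vecB (bre bim : R) : 'cV[R]_2 :=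
  \col_(i < 2) if i == 0 :> nat then bre else bim.

Definition Ep (p : nat) (th0 bre bim : R) : set 'cV[R]_p :=
  [set Z : 'cV[R]_p | (forall k, 0 < Z k 0) /\ matA p th0 *m Z = vecB bre bim].

(* F(X) = min_k X_k on R_+^p.  The seed of the iterated min is
   \sum_k X_k, which dominates every X_k on R_+^p, so for p >= 1 this is
   exactly min_k X_k there. *)
Definition Fmin (p : nat) (X : 'cV[R]_p) : R :=
  \big[Num.min/(\sum_k X k 0)]_k X k 0.

(* || ||X''|| ||_{L^infty} of the curve made of p arcs of circles of radii
   R_0..R_{p-1}: on the k-th arc ||X''|| = 1/R_k, so its essential supremum
   is max_k 1/R_k. *)
Definition curv_max (p : nat) (Rv : 'cV[R]_p) : R :=
  \big[Num.max/0]_k (Rv k 0)^-1.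

End Defs.

(* On positive radius vectors the maximal curvature is 1 / min_k R_k, so minimising it
   amounts to maximising F = min_k R_k over E_p.  Projecting the closing condition
   A R = B on the bisector e^{i Omega/2} gives sum_k w_k R_k = const with weights
   w_k = sin ((k+1) th0 - Omega/2) - sin (k th0 - Omega/2) > 0, so E_p is bounded.
   Given one admissible R0, the solutions of A R = B with all coordinates >= F(R0) > 0
   form a nonempty compact subset of E_p on which the continuous F attains its maximum,
   and every other element of E_p has F < F(R0). *)

From mathcomp Require Import all_boot all_order all_algebra.
From mathcomp Require Import all_classical all_reals all_analysis.
From mathcomp Require Import lra ring.
Import Order.TTheory GRing.Theory Num.Theory numFieldNormedType.Exports.
Local Open Scope ring_scope.
Local Open Scope classical_set_scope.

Lemma ler_term_sum {R : numDomainType} {I : finType} (F : I -> R) k :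
  (forall i, 0 <= F i) -> F k <= \sum_i F i.
Proof. by move=> F_ge0; rewrite (bigD1 k) //= lerDl sumr_ge0. Qed.

Section MatrixTopology.
Context {R : realType}.

Lemma continuous_big_seed (T : topologicalType) (op : R -> R -> R)
    (I : Type) (r : seq I) (s : T -> R) (F : I -> T -> R) :
  (forall f g : T -> R, continuous f -> continuous g ->
     continuous (fun x => op (f x) (g x))) ->
  continuous s -> (forall i, continuous (F i)) ->
  continuous (fun x => \big[op/s x]_(i <- r) F i x).
Proof.
move=> op_cont s_cont F_cont; elim: r => [|i r IHr].
  by under eq_fun do rewrite big_nil.
by under eq_fun do rewrite big_cons; exact: op_cont.
Qed.

Lemma trmx_continuous m n : continuous (@trmx R m n).
Proof.
move=> M s /= /nbhs_ballP [e e0 es]; apply/nbhs_ballP; exists e => // N [_ MN].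
by apply: es; split => // i j; rewrite !mxE; exact: MN.
Qed.

Lemma compact_cV_box {n} (a b : 'I_n -> R) (K : set 'cV[R]_n) :
  closed K -> (forall Z, K Z -> forall k, a k <= Z k 0 <= b k) -> compact K.
Proof.
move=> K_closed K_box.
have -> : K = trmx @` [set v : 'rV[R]_n | K v^T].
  by apply/seteqP; split => [Z KZ|_ [v Kv <-] //]; exists Z^T; rewrite /= trmxK.
apply: continuous_compact; first exact/continuous_subspaceT/trmx_continuous.
have box_compact := @rV_compact _ _ (fun k => `[a k, b k]%classic)
  (fun k => @segment_compact R (a k) (b k)).
apply: (subclosed_compact _ box_compact).
  by apply: preimage_closed => // v _; exact: trmx_continuous.
by move=> v /K_box box k /=; have := box k; rewrite mxE in_itv.
Qed.
End MatrixTopology.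

Section Fmin.
Context {R : realType} {p : nat}.
Hypothesis p_gt0 : (0 < p)%N.
Implicit Types X Z : 'cV[R]_p.

Lemma Fmin_le Z k : Fmin Z <= Z k 0.
Proof. exact: bigmin_le. Qed.

Lemma Fmin_attained Z : (forall k, 0 <= Z k 0) -> exists k, Fmin Z = Z k 0.
Proof.
move=> Z_ge0.
have [k _ Zk] := eq_bigmin (Ordinal p_gt0) xpredT (fun k => Z k 0) isT
  (fun k _ => ler_term_sum (fun i => Z i 0) k Z_ge0).
by exists k.
Qed.

Lemma Fmin_gt0 Z : (forall k, 0 < Z k 0) -> 0 < Fmin Z.
Proof. by move=> Z_gt0; have [k ->] := Fmin_attained _ (fun k => ltW (Z_gt0 k)). Qed.

Lemma curv_max_Fmin X : (forall k, 0 < X k 0) -> curv_max X = (Fmin X)^-1.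
Proof.
move=> X_gt0; have [k Xk] := Fmin_attained _ (fun k => ltW (X_gt0 k)).
apply: le_anti; rewrite Xk le_bigmax andbT.
apply: bigmax_le => [|i _]; first by rewrite invr_ge0 ltW.
by rewrite lef_pV2 ?posrE // -Xk Fmin_le.
Qed.

Lemma curv_max_minimal_iff_Fmin_maximal (S : set 'cV[R]_p) X :
  (forall Z, S Z -> forall k, 0 < Z k 0) -> S X ->
  (forall Z, S Z -> curv_max X <= curv_max Z) <->
  (forall Z, S Z -> Fmin Z <= Fmin X).
Proof.
move=> S_gt0 SX.
have curvE Z : S Z -> curv_max Z = (Fmin Z)^-1.
  by move=> SZ; exact: curv_max_Fmin (S_gt0 _ SZ).
have Fmin_S_gt0 Z : S Z -> 0 < Fmin Z by move=> SZ; exact: Fmin_gt0 (S_gt0 _ SZ).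
by split=> H Z SZ; have := H Z SZ; rewrite !curvE // lef_pV2 ?posrE ?Fmin_S_gt0.
Qed.

Lemma Fmin_continuous : continuous (@Fmin R p).
Proof.
apply: continuous_big_seed => [f g f_cont g_cont x||k]; last exact: coord_continuous.
  exact: continuous_min (f_cont x) (g_cont x).
apply: continuous_big_seed => [f g f_cont g_cont x||k]; last exact: coord_continuous.
  exact: continuousD (f_cont x) (g_cont x).
exact: cst_continuous.
Qed.
End Fmin.

Lemma mulmx_coord_continuous (R : realType) m n q (M : 'M[R]_(m, n)) i j :
  continuous (fun Z : 'M[R]_(n, q) => (M *m Z) i j).
Proof.
under eq_fun do rewrite mxE.
apply: continuous_big_seed => [f g f_cont g_cont x||k].
- exact: continuousD (f_cont x) (g_cont x).
- exact: cst_continuous.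
- by move=> Z; apply: continuousM; [exact: cst_continuous|exact: coord_continuous].
Qed.

Definition pos_solutions {R : realType} {n p} (M : 'M[R]_(n, p)) (v : 'cV[R]_n) :
  set 'cV[R]_p := [set Z : 'cV[R]_p | (forall k, 0 < Z k 0) /\ M *m Z = v].

Definition solutions_ge {R : realType} {n p} (M : 'M[R]_(n, p)) (v : 'cV[R]_n) m :
  set 'cV[R]_p := [set Z : 'cV[R]_p | (forall k, m <= Z k 0) /\ M *m Z = v].

Section MaxMinCoordinate.
Context {R : realType} {n p : nat} {M : 'M[R]_(n, p)} {v : 'cV[R]_n}.
Context {u : 'rV[R]_n}.
Hypothesis uM_gt0 : forall j, 0 < (u *m M) 0 j.

Lemma pos_solutions_bounded (Z : 'cV[R]_p) k :
  pos_solutions M v Z -> Z k 0 <= (u *m v) 0 0 / (u *m M) 0 k.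
Proof.
move=> [Z_gt0 MZ]; rewrite ler_pdivlMr // mulrC -MZ mulmxA [leRHS]mxE.
apply: (ler_term_sum (fun j => (u *m M) 0 j * Z j 0)) => j.
by rewrite mulr_ge0 // ltW.
Qed.

Lemma closed_solutions_ge m : closed (solutions_ge M v m).
Proof.
have -> : solutions_ge M v m =
    \bigcap_(k in setT) [set Z : 'cV[R]_p | m <= Z k 0] `&`
    \bigcap_(i in setT) [set Z : 'cV[R]_p | (M *m Z) i 0 = v i 0].
  apply/seteqP; split => Z [Zm MZ]; first by split => i _ /=; rewrite ?MZ.
  by split => [k|]; [exact: Zm|apply/matrixP => i j; rewrite (ord1 j); exact: MZ].
apply: closedI; apply: closed_bigI => i _.
  apply: (@preimage_closed _ _ (fun Z : 'cV[R]_p => Z i 0) [set x | m <= x]).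
    by move=> Z _; exact: coord_continuous.
  exact: closed_ge.
apply: (@preimage_closed _ _ (fun Z : 'cV[R]_p => (M *m Z) i 0) [set x | x = v i 0]).
  by move=> Z _; exact: mulmx_coord_continuous.
exact: closed_eq.
Qed.

Hypothesis p_gt0 : (0 < p)%N.

Lemma exists_Fmin_max : pos_solutions M v !=set0 ->
  exists2 X, pos_solutions M v X &
    forall Z, pos_solutions M v Z -> Fmin Z <= Fmin X.
Proof.
move=> [Z0 Z0_sol]; set m := Fmin Z0.
have m_gt0 : 0 < m := Fmin_gt0 p_gt0 _ Z0_sol.1.
pose K := solutions_ge M v m.
have K_sol Z : K Z -> pos_solutions M v Z.
  by move=> [Zm MZ]; split => // k; exact: lt_le_trans m_gt0 (Zm k).
have K_compact : compact K.
  apply: (compact_cV_box (fun=> m) (fun k => (u *m v) 0 0 / (u *m M) 0 k) _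
    (closed_solutions_ge m)).
  by move=> Z KZ k; rewrite KZ.1 pos_solutions_bounded //; exact: K_sol.
have K_Z0 : K Z0 by split; [exact: Fmin_le|exact: Z0_sol.2].
have [X /set_mem KX Xmax] := compact_EVT_max (ex_intro _ Z0 K_Z0) K_compact
  (continuous_subspaceT (@Fmin_continuous R p)).
exists X => [|Z Z_sol]; first exact: K_sol.
have [Zm|/existsNP [k /negP]] := pselect (forall k, m <= Z k 0).
  by apply/Xmax/mem_set; split => //; exact: Z_sol.2.
rewrite -ltNge => Zk_lt_m.
apply: le_trans (Fmin_le Z k) (ltW (lt_le_trans Zk_lt_m _)).
exact/Xmax/mem_set.
Qed.

End MaxMinCoordinate.

Definition dir_row {R : realType} (t : R) : 'rV[R]_2 :=
  \row_(i < 2) if i == 0 :> nat then cos t else sin t.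

Section ArcWeights.
Context {R : realType} {Omega : R} {p : nat}.
Hypothesis Omega_bounds : 0 < Omega < pi.

Lemma dir_row_matA (t th : R) j :
  (dir_row t *m matA p th) 0 j = sin (j.+1%:R * th - t) - sin (j%:R * th - t).
Proof. by rewrite mxE big_ord_recr big_ord1 /= !mxE /= !sinB; ring. Qed.

Lemma dir_row_matA_gt0 j : 0 < (dir_row (Omega / 2) *m matA p (Omega / p%:R)) 0 j.
Proof.
rewrite dir_row_matA; have [Om_gt0 Om_lt_pi] := andP Omega_bounds.
set th := Omega / p%:R.
have p_gt0 : (0 < p%:R :> R) by rewrite ltr0n (leq_ltn_trans _ (ltn_ord j)).
have th_gt0 : 0 < th by rewrite divr_gt0.
have jS : j.+1%:R * th = j%:R * th + th by rewrite -nat1r mulrDl mul1r addrC.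
have jth_ge0 : 0 <= j%:R * th by rewrite mulr_ge0 // ltW.
have jSth_le : j.+1%:R * th <= Omega.
  by rewrite /th mulrA ler_pdivrMr // mulrC ler_pM2l // ler_nat.
have pi2 : Omega / 2 < pi / 2 by rewrite ltr_pM2r.
rewrite jS in jSth_le *; set a := j%:R * th in jth_ge0 jSth_le *.
rewrite subr_gt0 ltr_sin ?in_itv /=; try (apply/andP; split); lra.
Qed.

End ArcWeights.

Theorem theorem5p4 (R : realType) (O A B : R * R) (Omega : R) (p : nat) :
  O != A -> O != B -> A != B ->
  0 < Omega < pi ->
  beta_vec O B = vrot Omega (alpha_vec O A) ->
  (2 <= p)%N ->
  let th0 := Omega / p%:R in
  let E := @Ep R p th0 (affix_re (alpha_vec O A) A B) (affix_im (alpha_vec O A) A B) in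
  E !=set0 ->
  (exists X, E X /\ (forall Z, E Z -> curv_max X <= curv_max Z))
  /\ (forall X, E X ->
        ((forall Z, E Z -> curv_max X <= curv_max Z) <->
         (forall Z, E Z -> Fmin Z <= Fmin X)))
  /\ (exists X, E X /\ (forall Z, E Z -> Fmin Z <= Fmin X)).
Proof.
move=> _ _ _ Omega_bounds _ p_ge2 th0 E E_neq0.
have p_gt0 : (0 < p)%N by apply: leq_trans p_ge2.
have E_gt0 Z : E Z -> forall k, 0 < Z k 0 by case.
have curv_Fmin X (EX : E X) := curv_max_minimal_iff_Fmin_maximal p_gt0 _ _ E_gt0 EX.
have [X EX Xmax] := exists_Fmin_max (dir_row_matA_gt0 Omega_bounds) p_gt0 E_neq0.
split; first by exists X; split => //; apply/curv_Fmin.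
by split => //; exists X.
Qed.
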